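(* Let $h\geq 2$. A subgroup $U\leq S_h\times\{id\}$ is an anonymity group with respect to $(h,n)$ for some $n\geq 2$ (here $\{id\}$ is the trivial subgroup of $S_n$), and every subgroup of $S_h\times\{id\}$ arises in this way. Consequently, the set of all anonymity groups (over all $h,n\geq 2$) is exactly $\{V\times\{id\}: V\ \text{a permutation group}\}$.
   Context: Permutations compose as $(\sigma\tau)(x)=\sigma(\tau(x))$. For integers $h,n\geq2$, let $G=S_h\times S_n$ and $\mathcal{P}=(S_n)^h$ (preference profiles), with $G$ acting by $(p^{(\varphi,\psi)})_i=\psi\,p_{\varphi^{-1}(i)}$. A social preference function (SPF) is any $F:\mathcal{P}\to S_n$; its symmetry group is $G(F)=\{(\varphi,\psi)\in G: F(p^{(\varphi,\psi)})=\psi F(p)\ \forall p\}$ and its anonymity group is $G_1(F)=G(F)\cap(S_h\times\{id\})$. A subgroup $U\leq S_h\times\{id\}$ is an anonymity group with respect to $(h,n)$ if $U=G_1(F)$ for some SPF $F$ on $\mathcal{P}=(S_n)^h$. *)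

From mathcomp Require Import all_boot all_fingroup.
Set Implicit Arguments. Unset Strict Implicit. Unset Printing Implicit Defensive.

(* Convention: the paper composes permutations as (s t)(x) = s (t x).
   In MathComp, (s * t)%g x = t (s x), so the paper's product s t is
   the MathComp product (t * s)%g. *)
Definition pcomp (n : nat) (s t : 'S_n) : 'S_n := (t * s)%g.

Definition profile (h n : nat) := {ffun 'I_h -> 'S_n}.

Definition prof_act (h n : nat) (g : 'S_h * 'S_n) (p : profile h n)
  : profile h n :=
  [ffun i => pcomp g.2 (p ((g.1)^-1%g i))].

Definition SPF (h n : nat) := profile h n -> 'S_n.

Definition sym_group (h n : nat) (F : SPF h n) : {set 'S_h * 'S_n} :=
  [set g : 'S_h * 'S_n |
     [forall p : profile h n, F (prof_act g p) == pcomp g.2 (F p)]].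

Definition anon_group (h n : nat) (F : SPF h n) : {set 'S_h * 'S_n} :=
  sym_group F :&: setX [set: 'S_h] [set 1%g].

Definition is_anonymity_group (h n : nat) (U : {set 'S_h * 'S_n}) : Prop :=
  exists F : SPF h n, U = anon_group F.

From Pilot Require Import Defs.
From mathcomp Require Import all_boot all_fingroup.
Set Implicit Arguments. Unset Strict Implicit. Unset Printing Implicit Defensive.

(* Permuting the voters is an action of S_h on profiles, and the anonymity
   group of any F is the stabiliser of F under it, hence of the form V x {id}.
   Conversely, for a subgroup V take a profile p0 with pairwise distinct
   entries (possible once n! >= h, e.g. n = h + 1): its stabiliser is trivial,
   so the indicator of the V-orbit of p0 is invariant exactly under V. *)

Section AnonymousAction.

Variables h n : nat.

Definition anon_act (p : profile h n) (s : 'S_h) : profile h n :=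
  prof_act (s, 1%g) p.

Lemma anon_actE p s i : anon_act p s i = p ((s^-1)%g i).
Proof. by rewrite ffunE; apply: mulg1. Qed.

Lemma anon_act1 : anon_act^~ 1%g =1 id.
Proof. by move=> p; apply/ffunP=> i; rewrite anon_actE invg1 perm1. Qed.

Lemma anon_actM p : act_morph anon_act p.
Proof. by move=> a b; apply/ffunP=> i; rewrite !anon_actE invMg permM. Qed.

Canonical anon_action := TotalAction anon_act1 anon_actM.

Lemma anon_act_inj (p : profile h n) : injective p -> injective (anon_act p).
Proof.
move=> p_inj a b eq_ab; apply: invg_inj; apply/permP=> i.
by apply: p_inj; rewrite -!anon_actE eq_ab.
Qed.

Definition anon_perms (F : SPF h n) : {set 'S_h} :=
  [set s | [forall p, F (anon_act p s) == F p]].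

Lemma group_set_anon_perms F : group_set (anon_perms F).
Proof.
apply/group_setP; split=> [|a b].
  by rewrite inE; apply/forallP=> p; rewrite anon_act1.
rewrite !inE => /forallP Fa /forallP Fb; apply/forallP=> p.
by rewrite anon_actM (eqP (Fb _)) (eqP (Fa _)).
Qed.

Canonical anon_perms_group F := group (group_set_anon_perms F).

Lemma anon_groupE F : anon_group F = setX (anon_perms F) [set 1%g].
Proof.
apply/setP=> [[s t]]; rewrite !inE /=.
case: (eqVneq t 1%g) => [->|]; rewrite ?andbF ?andbT //.
by apply: eq_forallb=> p; rewrite /Defs.pcomp mulg1.
Qed.

Definition orbit_indicator (V : {set 'S_h}) (p0 : profile h n) (tau : 'S_n)
  : SPF h n :=
  fun p => if p \in orbit anon_action V p0 then 1%g else tau.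

Lemma anon_perms_orbit_indicator (V : {group 'S_h}) p0 tau :
  injective (anon_act p0) -> tau != 1%g ->
  anon_perms (orbit_indicator V p0 tau) = V.
Proof.
move=> p0_free tau_neq1; apply/setP=> s; rewrite inE.
apply/forallP/idP=> [inv_s | sV p]; last by rewrite /orbit_indicator orbit_actr.
have := eqP (inv_s p0); rewrite /orbit_indicator orbit_refl.
case: ifP=> [/orbitP[v vV /p0_free <-] // | _ tau1].
by rewrite tau1 eqxx in tau_neq1.
Qed.

End AnonymousAction.

Definition distinct_profile (h : nat) : profile h h.+1 :=
  [ffun i => tperm ord0 (lift ord0 i)].

Lemma distinct_profile_inj h : injective (@distinct_profile h).
Proof.
move=> i j; rewrite !ffunE => /(congr1 (fun s : 'S_h.+1 => s ord0)).
by rewrite /= !tpermL => /lift_inj.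
Qed.

Lemma tperm0_max_neq1 n : tperm (ord0 : 'I_n.+2) ord_max != 1%g.
Proof. by apply/eqP=> /permP/(_ ord0); rewrite tpermL perm1. Qed.

Theorem mainTheorem5 :
  (forall (h : nat), 1 < h ->
     forall V : {group 'S_h},
       exists n : nat, 1 < n /\
         is_anonymity_group (setX (V : {set 'S_h}) [set 1%g] : {set 'S_h * 'S_n}))
  /\
  (forall (h n : nat), 1 < h -> 1 < n ->
     forall U : {set 'S_h * 'S_n}, is_anonymity_group U ->
       exists V : {group 'S_h}, U = setX (V : {set 'S_h}) [set 1%g]).
Proof.
split=> [[|[|h]] // _ V | h n _ _ U [F ->]]; last first.
  by exists (anon_perms_group F); rewrite anon_groupE.
exists h.+3; split=> //.
exists (orbit_indicator V (distinct_profile h.+2) (tperm ord0 ord_max)).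
rewrite anon_groupE anon_perms_orbit_indicator ?tperm0_max_neq1 //.
exact/anon_act_inj/distinct_profile_inj.
Qed.
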